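(* Let $s\ge 1$, $q=2^s$, and let $k,n$ be integers with $n\ge 2k\ge 2$. Let $g(X)=X^k+c_{k-1}X^{k-1}+\dots+c_1X+c_0\in\mathbb{F}_q[X]$ be a monic polynomial of degree $k$ dividing $X^n-1$, and suppose the cyclic code of length $n$ over $\mathbb{F}_q$ generated by $g(X)$ (the set of polynomials of degree $<n$ that are multiples of $g$, viewed as vectors of coefficients, which is an $[n,n-k]_q$ code) is MDS. Let $C=\mathsf{Companion}(c_0,\dots,c_{k-1})$. Then the matrix $C^k$ is MDS.
   Context: For $c_0,\dots,c_{k-1}\in\mathbb{F}_q$, $\mathsf{Companion}(c_0,\dots,c_{k-1})$ denotes the $k\times k$ matrix whose first $k-1$ rows are $e_2,e_3,\dots,e_k$ (ones on the superdiagonal, zeros elsewhere) and whose last row is $(c_0,c_1,\dots,c_{k-1})$. A linear code over $\mathbb{F}_q$ of length $n$ and dimension $k'$ is MDS if its minimal Hamming distance equals $n-k'+1$. A $k\times k$ matrix $M$ over $\mathbb{F}_q$ is called MDS if the $k\times 2k$ matrix $[I_k\mid M]$ generates an MDS code of length $2k$ and dimension $k$ (equivalently, minimal distance $k+1$). *)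

From HB Require Import structures.
From mathcomp Require Import all_boot all_order all_algebra all_field.
Set Implicit Arguments. Unset Strict Implicit. Unset Printing Implicit Defensive.
Import GRing.Theory.
Local Open Scope ring_scope.

Definition hamming_dist (F : eqType) (n : nat) (u v : 'rV[F]_n) : nat :=
  #|[set i : 'I_n | u 0 i != v 0 i]|.

Definition min_dist_eq (F : eqType) (n : nat) (C : pred 'rV[F]_n) (d : nat) : Prop :=
  (forall u v, C u -> C v -> u != v -> (d <= hamming_dist u v)%N) /\
  (exists u v, [/\ C u, C v, u != v & hamming_dist u v = d]).

Definition MDS_code (F : eqType) (n : nat) (C : pred 'rV[F]_n) (k' : nat) : Prop :=
  min_dist_eq C (n - k' + 1).

Definition code_of (F : fieldType) (m n : nat) (G : 'M[F]_(m, n)) : pred 'rV[F]_n :=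
  [pred c : 'rV[F]_n | (c <= G)%MS].

Definition MDS_matrix (F : fieldType) (k : nat) (M : 'M[F]_k) : Prop :=
  MDS_code (code_of (row_mx (1%:M : 'M[F]_k) M)) k.

Definition Companion (F : fieldType) (k : nat) (c : 'I_k -> F) : 'M[F]_k :=
  \matrix_(i < k, j < k) if (i.+1 < k)%N then ((j : nat) == i.+1)%:R else c j.

Definition monic_of (F : fieldType) (k : nat) (c : 'I_k -> F) : {poly F} :=
  'X^k + \sum_(i < k) c i *: 'X^i.

Definition cyclic_code (F : fieldType) (n : nat) (g : {poly F}) : pred 'rV[F]_n :=
  [pred v : 'rV[F]_n | g %| \sum_(i < n) v 0 i *: 'X^i].

(* Read a row vector v of length k as the polynomial v(X) of degree < k.  In
   characteristic 2, v C = X v(X) mod g, where C is the companion matrix of g,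
   so u C^k = X^k u(X) mod g.  Hence (u C^k)(X) - X^k u(X) is a multiple of g of
   degree < 2k <= n whose coefficient vector is the concatenation of u C^k and
   -u: for u <> 0 it is a nonzero codeword of the cyclic MDS code, of weight at
   least k + 1.  This is exactly the MDS property of [I | C^k]. *)

From mathcomp Require Import all_boot all_order all_algebra all_field.
Set Implicit Arguments. Unset Strict Implicit. Unset Printing Implicit Defensive.
Import GRing.Theory.
Local Open Scope ring_scope.

Section Weight.
Variable R : zmodType.

Definition weight n (u : 'rV[R]_n) : nat := #|[set i | u 0 i != 0]|.

Lemma weightE n (u : 'rV[R]_n) : weight u = \sum_(i < n) (u 0 i != 0 : nat).
Proof.
by rewrite /weight -sum1dep_card big_mkcond; apply: eq_bigr => i _; case: (_ != _).
Qed.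

Lemma hamming_distE n (u v : 'rV[R]_n) : hamming_dist u v = weight (u - v).
Proof. by apply: eq_card => i; rewrite !inE !mxE subr_eq0. Qed.

Lemma weight_eq0 n (u : 'rV[R]_n) : (weight u == 0)%N = (u == 0).
Proof.
rewrite weightE sum_nat_eq0; apply/forallP/eqP => [u0 | -> i]; last first.
  by rewrite mxE eqxx.
by apply/rowP => i; have := u0 i; rewrite eqb0 negbK mxE => /eqP.
Qed.

Lemma weight_row_mx m l (a : 'rV[R]_m) (b : 'rV[R]_l) :
  weight (row_mx a b) = (weight a + weight b)%N.
Proof.
by rewrite !weightE big_split_ord; congr (_ + _)%N; apply: eq_bigr => i _;
  rewrite ?row_mxEl ?row_mxEr.
Qed.

Lemma weightN n (u : 'rV[R]_n) : weight (- u) = weight u.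
Proof. by apply: eq_card => i; rewrite !inE mxE oppr_eq0. Qed.

Lemma min_dist_le_weight n (C : pred 'rV[R]_n) d (w : 'rV[R]_n) :
  min_dist_eq C d -> C 0 -> C w -> w != 0 -> (d <= weight w)%N.
Proof. by case=> dmin _ C0 Cw w0; rewrite -[w]subr0 -hamming_distE dmin. Qed.

End Weight.

Section RowPoly.
Variable R : comNzRingType.

Lemma rVpolyE d (v : 'rV[R]_d) : rVpoly v = \sum_(i < d) v 0 i *: 'X^i.
Proof.
rewrite {1}[v]row_sum_delta linear_sum; apply: eq_bigr => i _.
by rewrite linearZ /= rVpoly_delta.
Qed.

Lemma rVpoly_row_mx m l (a : 'rV[R]_m) (b : 'rV[R]_l) :
  rVpoly (row_mx a b) = rVpoly a + 'X^m * rVpoly b.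
Proof.
rewrite !rVpolyE big_split_ord /=; congr (_ + _).
  by apply: eq_bigr => i _; rewrite row_mxEl.
rewrite mulr_sumr; apply: eq_bigr => i _.
by rewrite row_mxEr -scalerAr -exprD.
Qed.

Lemma weight_poly_rV d n (w : 'rV[R]_d) :
  (d <= n)%N -> weight (poly_rV (rVpoly w) : 'rV_n) = weight w.
Proof.
move=> le_dn; rewrite !weightE.
have -> : \sum_(i < d) (w 0 i != 0 : nat) = \sum_(i < d) ((rVpoly w)`_i != 0 : nat).
  by apply: eq_bigr => i _; rewrite coef_rVpoly_ord.
rewrite (big_ord_widen n (fun i => (rVpoly w)`_i != 0 : nat) le_dn) [RHS]big_mkcond.
apply: eq_bigr => i _; rewrite mxE; case: ltnP => // le_di.
by rewrite nth_default ?eqxx // (leq_trans (size_poly _ _) le_di).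
Qed.

End RowPoly.

Section CompanionAction.
Variable F : fieldType.

Lemma cyclic_codeE n (g : {poly F}) (v : 'rV_n) : cyclic_code g v = (g %| rVpoly v).
Proof. by rewrite /cyclic_code /= rVpolyE. Qed.

Lemma rVpoly_companion_row k (c : 'I_k -> F) (l : 'I_k) :
  rVpoly (row l (Companion c)) =
  if (l.+1 < k)%N then 'X^(l.+1) else monic_of c - 'X^k.
Proof.
rewrite rVpolyE; case: ifP => [lt_lk | ge_lk].
  rewrite (bigD1 (Ordinal lt_lk)) //= !mxE lt_lk eqxx scale1r big1 ?addr0 // => j ne_jl.
  rewrite !mxE lt_lk; case: eqP => [ej | _]; last by rewrite scale0r.
  by case/eqP: ne_jl; apply: val_inj.
rewrite /monic_of addrAC subrr add0r; apply: eq_bigr => j _.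
by rewrite !mxE ge_lk.
Qed.

Lemma rVpoly_mul_companion k (c : 'I_k.+1 -> F) (v : 'rV_k.+1) :
  rVpoly (v *m Companion c) =
  'X * rVpoly v + v 0 ord_max *: (monic_of c - 'X^(k.+1) *+ 2).
Proof.
rewrite mulmx_sum_row linear_sum big_ord_recr /= linearZ /= rVpoly_companion_row ltnn.
under eq_bigr => i _ do rewrite linearZ /= rVpoly_companion_row /= ltnS ltn_ord.
rewrite rVpolyE mulr_sumr big_ord_recr /= -scalerAr -exprS.
under [in RHS]eq_bigr => i _ do rewrite -scalerAr -exprS.
rewrite -[RHS]addrA -scalerDr; congr (_ + _ *: _).
by rewrite mulr2n opprD addrCA addNKr.
Qed.

End CompanionAction.

Section Characteristic2.
Variables (F : fieldType) (k : nat) (c : 'I_k.+1 -> F).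
Hypothesis pchar2F : 2 \in [pchar F].

Lemma rVpoly_mul_companion_pchar2 (v : 'rV_k.+1) :
  rVpoly (v *m Companion c) = 'X * rVpoly v + v 0 ord_max *: monic_of c.
Proof.
have pchar2P : 2 \in [pchar {poly F}] by rewrite pchar_poly.
by rewrite rVpoly_mul_companion (mulrn_pchar pchar2P) subr0.
Qed.

Lemma dvdp_rVpoly_companion_exp j (v : 'rV_k.+1) :
  monic_of c %| rVpoly (v *m Companion c ^+ j) - 'X^j * rVpoly v.
Proof.
elim: j v => [|j IHj] v; first by rewrite mulmx1 expr0 mul1r subrr dvdp0.
have -> : rVpoly (v *m Companion c ^+ j.+1) - 'X^(j.+1) * rVpoly v =
    (rVpoly (v *m Companion c *m Companion c ^+ j) - 'X^j * rVpoly (v *m Companion c))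
    + 'X^j * (rVpoly (v *m Companion c) - 'X * rVpoly v).
  by rewrite exprS mulmxA mulrBr mulrA -exprSr addrA subrK.
rewrite dvdp_add ?dvdp_mull // rVpoly_mul_companion_pchar2 addrC addKr.
by rewrite -mul_polyC dvdp_mull.
Qed.

Lemma weight_companion_exp_gt n (u : 'rV_k.+1) :
  (k.+1 + k.+1 <= n)%N ->
  MDS_code (cyclic_code (monic_of c) : pred 'rV_n) (n - k.+1) -> u != 0 ->
  (k.+1 < weight u + weight (u *m Companion c ^+ k.+1))%N.
Proof.
move=> le_2k_n mds_g u_neq0.
pose w := row_mx (u *m Companion c ^+ k.+1) (- u).
have size_w : (size (rVpoly w) <= n)%N := leq_trans (size_poly _ _) le_2k_n.
have weight_w : weight (poly_rV (rVpoly w) : 'rV_n) =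
    (weight u + weight (u *m Companion c ^+ k.+1))%N.
  by rewrite weight_poly_rV // weight_row_mx weightN addnC.
have w_code : cyclic_code (monic_of c) (poly_rV (rVpoly w) : 'rV_n).
  rewrite cyclic_codeE poly_rV_K // rVpoly_row_mx linearN /= mulrN.
  exact: dvdp_rVpoly_companion_exp.
have zero_code : cyclic_code (monic_of c) (0 : 'rV_n).
  by rewrite cyclic_codeE linear0 dvdp0.
have w_neq0 : poly_rV (rVpoly w) != 0 :> 'rV_n.
  by rewrite -weight_eq0 weight_w addn_eq0 weight_eq0 negb_and u_neq0.
rewrite -weight_w -addn1 -{1}(subKn (leq_trans (leq_addr _ _) le_2k_n)).
exact: min_dist_le_weight mds_g zero_code w_code w_neq0.
Qed.

End Characteristic2.

Lemma MDS_matrix_weight (F : fieldType) k (M : 'M[F]_k.+1) :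
  (forall u : 'rV_k.+1, u != 0 -> (k.+1 < weight u + weight (u *m M))%N) ->
  MDS_matrix M.
Proof.
move=> weightM; rewrite /MDS_matrix /MDS_code addnK addn1; split.
  move=> _ _ /submxP[x ->] /submxP[y ->] ne_xy.
  rewrite hamming_distE -mulmxBl mul_mx_row mulmx1 weight_row_mx; apply: weightM.
  by apply: contraNneq ne_xy => /eqP; rewrite subr_eq0 => /eqP ->.
pose e : 'rV[F]_k.+1 := delta_mx 0 ord0.
have e_neq0 : e != 0.
  by apply/eqP => /rowP /(_ ord0); rewrite !mxE eqxx; apply/eqP/oner_neq0.
exists (row_mx e (e *m M)), 0; split.
- by rewrite /code_of /= -{1}[e]mulmx1 -mul_mx_row submxMl.
- by rewrite /code_of /= sub0mx.
- by apply: contra_neq e_neq0 => /(congr1 lsubmx); rewrite row_mxKl linear0.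
apply/eqP; rewrite hamming_distE subr0 weight_row_mx eqn_leq weightM // andbT.
have weight_e : weight e = 1%N.
  apply: (@eq_card1 _ ord0) => i; rewrite !inE mxE eqxx.
  by case: (i == ord0); rewrite ?oner_eq0 ?eqxx.
by rewrite weight_e ltnS (leq_trans (max_card _)) ?card_ord.
Qed.

Theorem mainTheorem1 (F : finFieldType) (s k n : nat) (c : 'I_k -> F) :
  (1 <= s)%N -> #|F| = (2 ^ s)%N ->
  (1 <= k)%N -> (2 * k <= n)%N ->
  monic_of c %| 'X^n - 1 ->
  MDS_code (@cyclic_code F n (monic_of c)) (n - k) ->
  MDS_matrix (Companion c ^+ k).
Proof.
move=> _ cardF; case: k c => // k c _ le_2k_n _ mds_g.
have pchar2F : 2 \in [pchar F] by apply: (card_finPcharP cardF).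
apply: MDS_matrix_weight => u; apply: weight_companion_exp_gt mds_g => //.
by rewrite addnn -mul2n.
Qed.
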